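(* In the standing setup with duals, the element $\check 1_e\in\check A_e$ is invariant under the dual action $\check\varphi$ of $G$ if and only if $\sigma(h)(\sigma(j)+1)\equiv 0\pmod 2$ for all $h\in G$ (equivalently, if and only if $GM_f$ is $G$-Euler in the sense that $\varphi(h^{-1}j)|_{A_h}=\exp(2\pi i\mathcal{Q})|_{A_h}$ for all $h$).
   Context: Standing setup. Let $f\in\mathbb{C}[z_1,\dots,z_n]$ be quasi-homogeneous with isolated singularity at $0$ and weights $q_i\in(0,1)$; $M_f$ is its Milnor ring graded by $\deg z_i=q_i$, and $d=\sum_i(1-2q_i)$. $G$ is a finite abelian group with diagonal representation $\rho$ leaving $f$ invariant, $\rho(g)=\mathrm{diag}(e^{2\pi i\nu_i(g)})$, $\nu_i(g)\in[0,1)$; $\mathrm{Fix}(g)$ is spanned by the $z_i$ with $\nu_i(g)=0$; $A_g=M_{f|_{\mathrm{Fix}(g)}}$ (equal to $\mathbb{C}$ if $\mathrm{Fix}(g)=0$) with elements $a1_g$; $GM_f=\bigoplus_gA_g$. Fix $\sigma\in\mathrm{Hom}(G,\mathbb{Z}/2\mathbb{Z})$; action $\varphi(h)(a1_g)=(-1)^{\sigma(h)\sigma(g)}\det(\rho(h))^{-1}\det(\rho(h)|_{\mathrm{Fix}(g)})\,a(\rho(h)z)\,1_g$; character $\chi(h)=(-1)^{\sigma(h)}\det\rho(h)$. Assume $j\in G$ with $\rho(j)=\mathrm{diag}(e^{2\pi iq_1},\dots,e^{2\pi iq_n})$. Dual: $\check A_g:=A_{gj^{-1}}$, $\check{GM_f}=\bigoplus_g\check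 A_g$; write $a\check1_g$ for the element $a1_{gj^{-1}}$ regarded in $\check A_g$; dual action $\check\varphi(h)(a\check1_g)=\chi(h)\cdot(\varphi(h)(a1_{gj^{-1}}))$ regarded in $\check A_g$. Shift $s_g=\sum_{i:\nu_i(g)\neq 0}(\nu_i(g)-q_i)$, $\mathcal{Q}(a1_h)=(\deg a+s_h)a1_h$. *)

From HB Require Import structures.
From mathcomp Require Import all_boot all_order all_algebra all_fingroup.
From mathcomp Require Import reals trigo.
From mathcomp.real_closed Require Import complex.
From mathcomp Require Import mpoly.

Set Implicit Arguments.
Unset Strict Implicit.
Unset Printing Implicit Defensive.

Import GRing.Theory Num.Theory.
Local Open Scope ring_scope.

Section GEuler.
Variable R : realType.
Local Notation C := (R[i]).

Definition e2pi (x : R) : C := Complex (cos (2 * pi * x)) (sin (2 * pi * x)).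

Variable n : nat.
Variable q : 'I_n -> R.

Definition wdeg (m : 'X_{1..n}) : R := \sum_(i < n) (m i)%:R * q i.

Definition qhomog (d : R) (a : {mpoly C[n]}) : Prop :=
  forall m, m \in msupp a -> wdeg m = d.

Variable gT : finGroupType.
Variable nu : gT -> 'I_n -> R.

Definition rho (g : gT) : 'M[C]_n := diag_mx (\row_i e2pi (nu g i)).

Definition pact (g : gT) (a : {mpoly C[n]}) : {mpoly C[n]} :=
  comp_mpoly [tuple (e2pi (nu g i))%:MP * 'X_i | i < n] a.

Definition isfix (g : gT) (i : 'I_n) : bool := nu g i == 0.

Definition inFix (g : gT) (a : {mpoly C[n]}) : Prop :=
  forall m, m \in msupp a -> forall i, ~~ isfix g i -> m i = 0%N.

Definition fres (f : {mpoly C[n]}) (g : gT) : {mpoly C[n]} :=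
  comp_mpoly [tuple (if isfix g i then 'X_i else 0) | i < n] f.

(* equality in the Milnor ring A_g = M_{f|Fix(g)} of (representatives of)
   elements a, b (polynomials in the Fix(g) variables): a - b lies in the
   Jacobian ideal generated by the partials d(f|Fix(g))/dz_i, i in Fix(g). *)
Definition eqA (f : {mpoly C[n]}) (g : gT) (a b : {mpoly C[n]}) : Prop :=
  exists c : 'I_n -> {mpoly C[n]},
    a - b = \sum_(i < n | isfix g i) c i * mderiv i (fres f g).

Definition detFix (h g : gT) : C := \prod_(i < n | isfix g i) e2pi (nu h i).

Variable sigma : gT -> bool.

Definition sgn (b : bool) : C := (-1) ^+ b.

(* phi(h)(a 1_g), returned as the representative in A_g *)
Definition phi (h g : gT) (a : {mpoly C[n]}) : {mpoly C[n]} :=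
  (sgn (sigma h && sigma g) * (\det (rho h))^-1 * detFix h g) *: pact h a.

Definition chi (h : gT) : C := sgn (sigma h) * \det (rho h).

(* dual action: check-phi(h)(a check1_g) = chi(h) phi(h)(a 1_{g j^-1}),
   an element of check A_g = A_{g j^-1} *)
Definition dphi (j h g : gT) (a : {mpoly C[n]}) : {mpoly C[n]} :=
  chi h *: phi h (g * j^-1)%g a.

Definition shift (g : gT) : R := \sum_(i < n | ~~ isfix g i) (nu g i - q i).

(* G-Euler: phi(h^-1 j)|_{A_h} = exp(2 pi i Q)|_{A_h} for all h in G, where
   exp(2 pi i Q) acts on the class of a quasi-homogeneous a of degree d by
   e(d + s_h). *)
Definition GEuler (f : {mpoly C[n]}) (G : {set gT}) (j : gT) : Prop :=
  forall h, h \in G -> forall (d : R) (a : {mpoly C[n]}),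
    inFix h a -> qhomog d a ->
    eqA f h (phi (h^-1 * j)%g h a) (e2pi (d + shift h) *: a).

End GEuler.

From HB Require Import structures.
From mathcomp Require Import all_boot all_order all_algebra all_fingroup.
From mathcomp Require Import reals trigo.
From mathcomp.real_closed Require Import complex.
From mathcomp Require Import mpoly.
From mathcomp Require Import ring lra.

Set Implicit Arguments.
Unset Strict Implicit.
Unset Printing Implicit Defensive.

Import Order.TTheory GRing.Theory Num.Theory.
Local Open Scope ring_scope.

(* Write k := h^-1 j.  Since rho(h) rho(k) = rho(j) = diag(e(q_i)), the element
   k acts on a quasi-homogeneous a of degree d in the Fix(h) variables by e(d),
   and det(rho k)^-1 det(rho k |_Fix(h)) = prod_{i not in Fix(h)} e(nu_i(h) - q_i)
   = e(s_h).  Hence phi(h^-1 j) a 1_h = (-1)^{sigma(h)(sigma(j)+1)} e(d + s_h) a 1_h,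
   and similarly check-phi(h) check1_e = (-1)^{sigma(h)(sigma(j)+1)} check1_e,
   because j^-1 has no fixed coordinate.  Both conditions therefore reduce to
   the vanishing of the sign; the sign can be read off at z = 0, where every
   element of the Jacobian ideal vanishes. *)

Section ExpTwoPiI.
Variable R : realType.

Lemma e2piD (x y : R) : e2pi (x + y) = e2pi x * e2pi y.
Proof. by rewrite /e2pi mulrDr cosD sinD /=; congr Complex; ring. Qed.

Lemma e2pi0 : e2pi (0 : R) = 1.
Proof. by rewrite /e2pi mulr0 cos0 sin0. Qed.

Lemma e2pi_neq0 (x : R) : e2pi x != 0.
Proof.
apply/eqP; rewrite /e2pi => -[c0 s0]; have := cos2Dsin2 (2 * pi * x).
by rewrite c0 s0 expr0n addr0 => /eqP; rewrite eq_sym oner_eq0.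
Qed.

Lemma e2pi_neq1 (x : R) : 0 < x < 1 -> e2pi x != 1.
Proof.
move=> /andP[x_gt0 x_lt1]; apply/eqP => -[cos1 _].
have sin_gt0 : 0 < sin (pi * x).
  apply: sin_gt0_pi; rewrite mulr_gt0 ?pi_gt0 //=.
  by rewrite -[ltRHS]mulr1 ltr_pM2l // pi_gt0.
have double : cos (pi * x) ^+ 2 - sin (pi * x) ^+ 2 = 1.
  by rewrite -cos1 -cosD; congr cos; ring.
have : sin (pi * x) ^+ 2 = 0 by have := cos2Dsin2 (pi * x); lra.
by move/eqP; rewrite sqrf_eq0 (gt_eqF sin_gt0).
Qed.

Lemma e2piN (x : R) : e2pi (- x) = (e2pi x)^-1.
Proof.
apply: (mulIf (e2pi_neq0 x)).
by rewrite -e2piD addNr e2pi0 mulVf // e2pi_neq0.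
Qed.

Lemma e2pi_sum (I : Type) (r : seq I) (P : pred I) (F : I -> R) :
  e2pi (\sum_(i <- r | P i) F i) = \prod_(i <- r | P i) e2pi (F i).
Proof. exact: (big_morph _ e2piD e2pi0). Qed.

Lemma e2pi_natrM (k : nat) (x : R) : e2pi (k%:R * x) = e2pi x ^+ k.
Proof.
elim: k => [|k IHk]; first by rewrite mul0r e2pi0.
by rewrite -addn1 natrD mulrDl mul1r e2piD IHk exprD.
Qed.

End ExpTwoPiI.

Section DiagonalSubstitution.
Variables (R : realType) (n : nat).
Local Notation C := (R[i]).

Lemma comp_mpoly_diag (c : 'I_n -> C) (p : {mpoly C[n]}) :
  comp_mpoly [tuple (c i)%:MP * 'X_i | i < n] p
  = \sum_(m <- msupp p) (p@_m * \prod_i c i ^+ m i) *: 'X_[m].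
Proof.
rewrite comp_mpolyE; apply: eq_bigr => m _; rewrite -scalerA; congr (_ *: _).
rewrite (eq_bigr (fun i => (c i ^+ m i)%:MP * 'X_i ^+ m i)); last first.
  by move=> i _; rewrite tnth_mktuple exprMn rmorphXn.
by rewrite big_split /= -rmorph_prod mul_mpolyC mpolyXE_id.
Qed.

Lemma pact_eigen (gT : finGroupType) (nu : gT -> 'I_n -> R) k
    (a : {mpoly C[n]}) (e : C) :
  (forall m, m \in msupp a -> \prod_i e2pi (nu k i) ^+ m i = e) ->
  pact nu k a = e *: a.
Proof.
move=> eigen; rewrite /pact comp_mpoly_diag [in RHS](mpolyE a) scaler_sumr.
by apply: eq_big_seq => m m_a; rewrite eigen // scalerA mulrC.
Qed.

Lemma pact1 (gT : finGroupType) (nu : gT -> 'I_n -> R) k :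
  pact nu k (1 : {mpoly C[n]}) = 1.
Proof.
rewrite (@pact_eigen _ _ _ _ 1) ?scale1r // => m.
by rewrite msupp1 inE => /eqP ->; rewrite big1 // => i _; rewrite mnm0E.
Qed.

Lemma meval0_mcoeff0 (p : {mpoly C[n]}) : p.@[fun=> 0] = p@_0%MM.
Proof.
rewrite mevalE [in RHS](mpolyE p) raddf_sum /=; apply: eq_bigr => m _.
rewrite mcoeffZ mcoeffX; congr (_ * _).
have [->|m_neq0] := eqVneq m 0%MM.
  by rewrite big1 // => i _; rewrite mnm0E.
have [i mi_neq0] : exists i, m i != 0%N.
  apply/existsP; apply: contraR m_neq0 => /existsPn m0; apply/eqP/mnmP => i.
  by rewrite mnm0E; apply/eqP; have := m0 i; rewrite negbK.
by rewrite (bigD1 i) //= expr0n (negPf mi_neq0) mul0r.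
Qed.

Lemma wdeg_mnm1 (q : 'I_n -> R) i : wdeg q U_(i)%MM = q i.
Proof.
rewrite /wdeg (bigD1 i) //= mnm1E eqxx mul1r big1 ?addr0 // => k /negPf ki.
by rewrite mnm1E eq_sym ki mul0r.
Qed.

(* A quasi-homogeneous f of degree 1 with weights < 1 has no linear monomial,
   so the Jacobian ideal of any restriction f|_Fix(g) vanishes at 0. *)
Lemma meval0_mderiv_fres (q : 'I_n -> R) (f : {mpoly C[n]}) :
    (forall k, q k < 1) -> qhomog q 1 f ->
  forall (gT : finGroupType) (nu : gT -> 'I_n -> R) g i,
  (mderiv i (fres nu f g)).@[fun=> 0] = 0.
Proof.
move=> q_lt1 f_qh gT nu g i.
have proj : [tuple (if isfix nu g k then 'X_k else 0) | k < n]
    = [tuple ((if isfix nu g k then 1 else 0) : C)%:MP * 'X_k | k < n]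
    :> n.-tuple {mpoly C[n]}.
  by apply: eq_mktuple => k; case: ifP; rewrite ?rmorph1 ?rmorph0 ?mul1r ?mul0r.
rewrite /fres proj meval0_mcoeff0 mcoeff_deriv add0m mnm0E comp_mpoly_diag.
rewrite raddf_sum /=.
apply: big1_seq => m /andP[_ m_f]; rewrite mcoeffZ mcoeffX.
case: eqP => [m_lin|_]; last by rewrite mulr0.
by have := q_lt1 i; rewrite -(f_qh m m_f) m_lin wdeg_mnm1 ltxx.
Qed.

End DiagonalSubstitution.

Section Representation.
Variables (R : realType) (n : nat) (q : 'I_n -> R).
Variables (gT : finGroupType) (G : {group gT}) (nu : gT -> 'I_n -> R).
Variable j : gT.
Hypothesis q_range : forall k, 0 < q k < 1.
Hypothesis rhoM : {in G &, forall g h, rho nu (g * h)%g = rho nu g *m rho nu h}.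
Hypothesis jG : j \in G.
Hypothesis rho_j : rho nu j = diag_mx (\row_k e2pi (q k)).

Lemma rho_diag g i : rho nu g i i = e2pi (nu g i).
Proof. by rewrite !mxE eqxx mulr1n. Qed.

Lemma e2pi_nuM g h i : g \in G -> h \in G ->
  e2pi (nu (g * h)%g i) = e2pi (nu g i) * e2pi (nu h i).
Proof. by move=> gG hG; rewrite -!rho_diag rhoM // mul_diag_mx !mxE eqxx. Qed.

Lemma e2pi_nu1 i : e2pi (nu 1%g i) = 1.
Proof.
apply: (mulIf (e2pi_neq0 (nu 1%g i))).
by rewrite -e2pi_nuM ?mulg1 ?mul1r.
Qed.

Lemma e2pi_nuV g i : g \in G -> e2pi (nu g^-1%g i) = (e2pi (nu g i))^-1.
Proof.
move=> gG; apply: (mulIf (e2pi_neq0 (nu g i))).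
by rewrite -e2pi_nuM ?groupV // mulVg e2pi_nu1 mulVf // e2pi_neq0.
Qed.

Lemma e2pi_nu_j i : e2pi (nu j i) = e2pi (q i).
Proof. by rewrite -rho_diag rho_j !mxE eqxx. Qed.

Lemma isfix_jV i : isfix nu j^-1%g i = false.
Proof.
apply/negP => /eqP nu0; have := e2pi_nuV i jG.
rewrite nu0 e2pi0 e2pi_nu_j => /esym/eqP; rewrite invr_eq1.
by apply/negP/e2pi_neq1.
Qed.

Lemma det_rho g : \det (rho nu g) = \prod_i e2pi (nu g i).
Proof. by rewrite det_diag; apply: eq_bigr => i _; rewrite mxE. Qed.

Lemma prod_e2pi_neq0 g (P : pred 'I_n) : \prod_(i | P i) e2pi (nu g i) != 0.
Proof.
by rewrite prodf_seq_neq0; apply/allP => i _; apply/implyP => _; apply: e2pi_neq0.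
Qed.

Lemma det_rho_neq0 g : \det (rho nu g) != 0.
Proof. by rewrite det_rho prod_e2pi_neq0. Qed.

Lemma e2pi_shift h : h \in G ->
  (\det (rho nu (h^-1 * j)%g))^-1 * detFix nu (h^-1 * j)%g h
  = e2pi (shift q nu h).
Proof.
move=> hG; set k := (h^-1 * j)%g.
have kG : k \in G by rewrite groupM ?groupV.
have nu_hk i : e2pi (nu h i) * e2pi (nu k i) = e2pi (q i).
  by rewrite -e2pi_nuM // mulKVg e2pi_nu_j.
rewrite det_rho (bigID (isfix nu h)) /= /detFix invfM mulrAC.
rewrite mulVf ?prod_e2pi_neq0 //.
rewrite mul1r; apply: (mulfI (prod_e2pi_neq0 k (fun i => ~~ isfix nu h i))).
rewrite mulfV ?prod_e2pi_neq0 // /shift e2pi_sum -big_split /= big1 // => i _.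
by rewrite e2piD e2piN mulrA [e2pi (nu k i) * _]mulrC nu_hk mulfV // e2pi_neq0.
Qed.

Lemma pact_qhomog h d (a : {mpoly R[i][n]}) : h \in G ->
  inFix nu h a -> qhomog q d a -> pact nu (h^-1 * j)%g a = e2pi d *: a.
Proof.
move=> hG a_fix a_qh; apply: pact_eigen => m m_a.
rewrite -(a_qh m m_a) /wdeg e2pi_sum; apply: eq_bigr => i _; rewrite e2pi_natrM.
case fix_i: (isfix nu h i); last by rewrite (a_fix m m_a i) ?fix_i.
move/eqP: fix_i => nu0; congr (_ ^+ _).
rewrite -e2pi_nu_j -[in RHS](mulKVg h j) (@e2pi_nuM h) ?groupM ?groupV //.
by rewrite nu0 e2pi0 mul1r.
Qed.

Variable sigma : gT -> bool.
Hypothesis sigmaM : {in G &, forall g h, sigma (g * h)%g = sigma g (+) sigma h}.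

Lemma sigma1 : sigma 1%g = false.
Proof. by have := sigmaM (group1 G) (group1 G); rewrite mulg1 addbb. Qed.

Lemma sigmaV g : g \in G -> sigma g^-1%g = sigma g.
Proof.
move=> gG; have := sigmaM gG (groupVr gG); rewrite mulgV sigma1.
by case: (sigma g); case: (sigma g^-1%g).
Qed.

Lemma phi_qhomog h d (a : {mpoly R[i][n]}) : h \in G ->
  inFix nu h a -> qhomog q d a ->
  phi nu sigma (h^-1 * j)%g h a
  = (sgn R (sigma h && ~~ sigma j) * e2pi (d + shift q nu h)) *: a.
Proof.
move=> hG a_fix a_qh.
have sigma_k : sigma (h^-1 * j)%g && sigma h = sigma h && ~~ sigma j.
  by rewrite sigmaM ?groupV // sigmaV //; case: (sigma h); case: (sigma j).
rewrite /phi (pact_qhomog hG a_fix a_qh) scalerA sigma_k -(mulrA (sgn R _)).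
rewrite e2pi_shift //.
by rewrite e2piD -mulrA [e2pi (shift _ _ _) * _]mulrC.
Qed.

Lemma dphi_e1 h : h \in G ->
  dphi nu sigma j h 1%g (1 : {mpoly R[i][n]})
  = (sgn R (sigma h) * sgn R (sigma h && sigma j)) *: 1.
Proof.
move=> hG; rewrite /dphi /phi /chi mul1g pact1 sigmaV // /detFix.
rewrite big_pred0 => [|i]; last exact: isfix_jV.
rewrite scalerA; congr (_ *: _).
by have := det_rho_neq0 h; set D := \det _ => D_neq0; field.
Qed.

Lemma sgn_and_eq1 a b :
  sgn R a * sgn R (a && b) = 1 <-> ((a * (b + 1)) %% 2 = 0)%N.
Proof.
have m1_neq1 : (-1 : R[i]) != 1.
  by rewrite -subr_eq0 -opprD oppr_eq0 -mulr2n pnatr_eq0.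
case: a; case: b; rewrite /sgn /= ?expr0 ?expr1 ?mulr1 ?mul1r ?mulrNN ?mulr1 //.
by split=> // m1_eq1; rewrite m1_eq1 eqxx in m1_neq1.
Qed.

Variable f : {mpoly R[i][n]}.
Hypothesis f_qh : qhomog q 1 f.

(* j^-1 has no fixed coordinate, so A_{j^-1} = C and eqA is plain equality. *)
Lemma eqA_jV (s : R[i]) : eqA nu f (1 * j^-1)%g (s *: 1) 1 <-> s = 1.
Proof.
have jacobian0 c : \sum_(i < n | isfix nu (1 * j^-1)%g i)
    c i * mderiv i (fres nu f (1 * j^-1)%g) = 0.
  by rewrite big_pred0 // => i; rewrite mul1g isfix_jV.
split => [[c]|->]; last by exists (fun=> 0); rewrite jacobian0 scale1r subrr.
rewrite jacobian0 => /eqP; rewrite subr_eq0 => /eqP /(congr1 (mcoeff 0%MM)).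
by rewrite mcoeffZ mcoeff1 eqxx mulr1.
Qed.

Lemma dual_e1_invariant_iff :
  (forall h, h \in G -> eqA nu f (1 * j^-1)%g (dphi nu sigma j h 1%g 1) 1)
  <-> (forall h, h \in G -> ((sigma h * (sigma j + 1)) %% 2 = 0)%N).
Proof.
by split=> inv h hG; have := inv h hG; rewrite dphi_e1 // eqA_jV sgn_and_eq1.
Qed.

Lemma GEuler_iff :
  (forall h, h \in G -> ((sigma h * (sigma j + 1)) %% 2 = 0)%N)
  <-> GEuler q nu sigma f G j.
Proof.
split=> [sign0 h hG d a a_fix a_qh|euler h hG].
  rewrite (phi_qhomog hG a_fix a_qh).
  have -> : sigma h && ~~ sigma j = false.
    by have := sign0 h hG; case: (sigma h); case: (sigma j).
  exists (fun=> 0); rewrite /sgn mul1r subrr big1 // => i _.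
  by rewrite mul0r.
case sigma_h: (sigma h); case sigma_j: (sigma j) => //; exfalso.
have one_fix : inFix nu h (1 : {mpoly R[i][n]}).
  by move=> m; rewrite msupp1 inE => /eqP -> i _; rewrite mnm0E.
have one_qh : qhomog q 0 (1 : {mpoly R[i][n]}).
  move=> m; rewrite msupp1 inE => /eqP ->.
  by rewrite /wdeg big1 // => i _; rewrite mnm0E mul0r.
have [c] := euler h hG 0 1 one_fix one_qh.
move/(congr1 (meval (fun=> 0))).
rewrite (phi_qhomog hG one_fix one_qh) sigma_h sigma_j mevalB !mevalZ meval1.
rewrite raddf_sum /= big1; last first.
  have q_lt1 k : q k < 1 by case/andP: (q_range k).
  by move=> i _; rewrite mevalM (meval0_mderiv_fres q_lt1 f_qh) mulr0.
rewrite /sgn expr1 !mulr1 mulN1r -opprD => /eqP; rewrite oppr_eq0 -mulr2n.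
by rewrite mulrn_eq0 /= (negPf (e2pi_neq0 _)).
Qed.

End Representation.

Theorem mainTheorem3 (R : realType) (n : nat) (q : 'I_n -> R)
  (f : {mpoly R[i][n]}) (gT : finGroupType) (G : {group gT})
  (nu : gT -> 'I_n -> R) (sigma : gT -> bool) (j : gT)
  (* weights in (0,1) *)
  (hq : forall k, 0 < q k < 1)
  (* f quasi-homogeneous of weighted degree 1 *)
  (hfqh : qhomog q 1 f)
  (* isolated singularity at 0 *)
  (hfiso : exists2 eps : R, 0 < eps &
     forall z : 'I_n -> R[i], (forall k, `|z k| < eps%:C%C) ->
       (forall k, (mderiv k f).@[z] = 0) -> z = (fun=> 0))
  (* G finite abelian, rho diagonal representation with nu_i(g) in [0,1) *)
  (hG : abelian G)
  (hnu : forall g k, 0 <= nu g k < 1)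
  (hrho : {in G &, forall g h, rho nu (g * h)%g = rho nu g *m rho nu h})
  (* rho leaves f invariant *)
  (hinv : {in G, forall g, pact nu g f = f})
  (* sigma in Hom(G, Z/2Z) *)
  (hsig : {in G &, forall g h, sigma (g * h)%g = sigma g (+) sigma h})
  (* the element j *)
  (hj : j \in G)
  (hjrho : rho nu j = diag_mx (\row_k e2pi (q k))) :
  ((* check 1_e (= 1 in A_{e j^-1}) is invariant under the dual action *)
   (forall h, h \in G ->
      eqA nu f (1 * j^-1)%g (dphi nu sigma j h 1%g 1) 1)
   <-> (forall h, h \in G -> ((sigma h * (sigma j + 1)) %% 2 = 0)%N))
  /\
  ((forall h, h \in G -> ((sigma h * (sigma j + 1)) %% 2 = 0)%N)
   <-> GEuler q nu sigma f G j).
Proof.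
split; first exact: dual_e1_invariant_iff.
exact: GEuler_iff.
Qed.
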